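(* Let $K$ be a field, $\kappa$ an infinite cardinal, $\mathcal R=(R_\alpha\mid\alpha<\kappa)$ a sequence of $K$-algebras, $P=\prod_{\alpha<\kappa}R_\alpha$ and $I=\bigoplus_{\alpha<\kappa}R_\alpha$. Let $R$ be a $K$-algebra containing an ideal $J$ which is isomorphic to $I$ as a $K$-algebra without unit, and assume there is a $K$-algebra isomorphism $R/J\cong K$. Then the $K$-algebras $R$ and $R(\kappa,K,\mathcal R)$ are isomorphic.
   Context: $R(\kappa,K,\mathcal R)$ denotes the $K$-subalgebra $I\oplus 1_P\cdot K$ of $P=\prod_{\alpha<\kappa}R_\alpha$, where $I=\bigoplus_{\alpha<\kappa}R_\alpha$. *)

From HB Require Import structures.
From mathcomp Require Import all_boot all_algebra.
From mathcomp Require Import boolp classical_sets cardinality.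
Set Implicit Arguments. Unset Strict Implicit. Unset Printing Implicit Defensive.
Import GRing.Theory.
Local Open Scope ring_scope.
Local Open Scope classical_set_scope.

Definition Pi (K : fieldType) (A : Type) (R_ : A -> algType K) : Type :=
  forall a : A, R_ a.

Section ProdOps.
Variables (K : fieldType) (A : Type) (R_ : A -> algType K).
Definition Pi_add (x y : Pi R_) : Pi R_ := fun a => x a + y a.
Definition Pi_mul (x y : Pi R_) : Pi R_ := fun a => x a * y a.
Definition Pi_scale (k : K) (x : Pi R_) : Pi R_ := fun a => k *: x a.
Definition Pi_one : Pi R_ := fun a => 1.
Definition Pi_const (k : K) : Pi R_ := fun a => k%:A.

Definition in_I (x : Pi R_) : Prop := finite_set [set a | x a != 0].

Definition in_RkKR (x : Pi R_) : Prop :=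
  exists k : K, exists y : Pi R_, in_I y /\ x = Pi_add y (Pi_const k).
End ProdOps.

Definition is_ideal (K : fieldType) (R : algType K) (J : set R) : Prop :=
  J 0 /\ (forall x y, J x -> J y -> J (x + y)) /\
  (forall (k : K) x, J x -> J (k *: x)) /\
  (forall r x, J x -> J (r * x) /\ J (x * r)).

(* Since R/J = K, every r in R splits uniquely as (r - phi(r) 1) + phi(r) 1 with r - phi(r) 1
   in J, i.e. R = J + K 1.  Likewise every element of R(kappa,K,R) splits uniquely as y + k 1_P
   with y in I: uniqueness holds because kappa is infinite, so a finitely supported y vanishes at
   some coordinate, where k 1_P reads off k.  Sending the J-part through J = I and keeping the
   scalar part is therefore a bijection, and it is multiplicative because of the identity
   (x + a)(y + b) = xy + (a y + b x) + ab for scalars a, b, valid in R and in each R_alpha. *)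
From mathcomp Require Import all_boot all_algebra.
From mathcomp Require Import boolp classical_sets cardinality.
Import GRing.Theory.
Local Open Scope ring_scope.
Local Open Scope classical_set_scope.

Lemma mulr_add_alg (K : pzRingType) (R : algType K) (x y : R) (a b : K) :
  (x + a%:A) * (y + b%:A) = x * y + (a *: y + b *: x) + (a * b)%:A.
Proof.
rewrite mulrDl !mulrDr !mulr_algl mulr_algr -scalerA.
by rewrite [a *: y + _]addrC !addrA.
Qed.

Section ProductAlgebra.
Set Implicit Arguments. Unset Strict Implicit.
Variables (K : fieldType) (A : Type) (R_ : A -> algType K).

Lemma Pi_const_inj (a : A) : injective (fun k => Pi_const R_ k a).
Proof. exact: fmorph_inj (GRing.in_alg (R_ a)). Qed.

Lemma in_I_common_zero {x y : Pi R_} :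
  infinite_set [set: A] -> in_I x -> in_I y -> exists a, x a = 0 /\ y a = 0.
Proof.
move=> hA Ix Iy.
have fin_supp : finite_set ([set a | x a != 0] `|` [set a | y a != 0]).
  by rewrite finite_setU.
have [a [_ /not_orP[/negP/negbNE/eqP xa0 /negP/negbNE/eqP ya0]]] :=
  infinite_setN0 (infinite_setD hA fin_supp).
by exists a.
Qed.

Lemma Pi_add_const_inj {x y : Pi R_} {k l : K} :
  infinite_set [set: A] -> in_I x -> in_I y ->
  Pi_add x (Pi_const R_ k) = Pi_add y (Pi_const R_ l) -> x = y /\ k = l.
Proof.
move=> hA Ix Iy exy.
have [a [xa0 ya0]] := in_I_common_zero hA Ix Iy.
have ekl : k = l.
  apply: (@Pi_const_inj a); have := congr1 (fun z => z a) exy.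
  by rewrite /Pi_add /= xa0 ya0 !add0r.
split=> //; apply: functional_extensionality_dep => b.
by have := congr1 (fun z => z b) exy; rewrite /Pi_add ekl => /addIr.
Qed.

Lemma Pi_mul_add_const (x y : Pi R_) (k l : K) :
  Pi_mul (Pi_add x (Pi_const R_ k)) (Pi_add y (Pi_const R_ l)) =
  Pi_add (Pi_add (Pi_mul x y) (Pi_add (Pi_scale k y) (Pi_scale l x)))
         (Pi_const R_ (k * l)).
Proof.
apply: functional_extensionality_dep => a.
exact: mulr_add_alg.
Qed.

Lemma Pi_add_constD (x y : Pi R_) (k l : K) :
  Pi_add (Pi_add x y) (Pi_const R_ (k + l)) =
  Pi_add (Pi_add x (Pi_const R_ k)) (Pi_add y (Pi_const R_ l)).
Proof.
apply: functional_extensionality_dep => a.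
by rewrite /Pi_add /Pi_const scalerDl addrACA.
Qed.

Lemma Pi_scale_add_const (c k : K) (x : Pi R_) :
  Pi_scale c (Pi_add x (Pi_const R_ k)) =
  Pi_add (Pi_scale c x) (Pi_const R_ (c * k)).
Proof.
apply: functional_extensionality_dep => a.
by rewrite /Pi_scale /Pi_add /Pi_const scalerDr scalerA.
Qed.

End ProductAlgebra.

Section Ideal.
Set Implicit Arguments. Unset Strict Implicit.
Variables (K : fieldType) (R : algType K) (J : set R).
Hypothesis hJ : is_ideal J.

Lemma ideal0 : J 0.
Proof. by case: hJ. Qed.

Lemma ideal_scale (k : K) {r : R} : J r -> J (k *: r).
Proof. by have [_ [_ [JZ _]]] := hJ; apply: JZ. Qed.

Lemma ideal_add {r s : R} : J r -> J s -> J (r + s).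
Proof. by have [_ [JD _]] := hJ; apply: JD. Qed.

Lemma ideal_mul {r s : R} : J r -> J (r * s).
Proof. by have [_ [_ [_ JM]]] := hJ => Jr; case: (JM s r Jr). Qed.

End Ideal.

Record augmentation {K : fieldType} {R : algType K} (J : set R) (phi : R -> K) :
  Prop := Augmentation {
  augD : forall r s, phi (r + s) = phi r + phi s;
  augM : forall r s, phi (r * s) = phi r * phi s;
  augZ : forall (k : K) r, phi (k *: r) = k * phi r;
  aug1 : phi 1 = 1;
  aug_ker : forall r, phi r = 0 <-> J r }.

Section Augmentation.
Set Implicit Arguments. Unset Strict Implicit.
Variables (K : fieldType) (R : algType K) (J : set R) (phi : R -> K).
Hypothesis aug : augmentation J phi.

Definition aug_part (r : R) : R := r - (phi r)%:A.

Lemma phi_alg (k : K) : phi k%:A = k.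
Proof. by rewrite (augZ aug) (aug1 aug) mulr1. Qed.

Lemma aug_partK (r : R) : aug_part r + (phi r)%:A = r.
Proof. exact: subrK. Qed.

Lemma aug_part_ideal (r : R) : J (aug_part r).
Proof.
apply/(aug_ker aug); rewrite /aug_part (augD aug) -scaleNr phi_alg.
exact: subrr.
Qed.

Lemma phi_add_alg (s : R) (k : K) : J s -> phi (s + k%:A) = k.
Proof. by move=> /(aug_ker aug) Js; rewrite (augD aug) Js phi_alg add0r. Qed.

Lemma aug_part_add_alg (s : R) (k : K) : J s -> aug_part (s + k%:A) = s.
Proof. by move=> Js; rewrite /aug_part phi_add_alg // addrK. Qed.

Lemma aug_part1 : aug_part 1 = 0.
Proof. by rewrite /aug_part (aug1 aug) scale1r subrr. Qed.

Lemma aug_partD (r s : R) : aug_part (r + s) = aug_part r + aug_part s.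
Proof. by rewrite /aug_part (augD aug) scalerDl opprD addrACA. Qed.

Lemma aug_partZ (k : K) (r : R) : aug_part (k *: r) = k *: aug_part r.
Proof. by rewrite /aug_part (augZ aug) scalerBr scalerA. Qed.

Lemma aug_partM (r s : R) :
  aug_part (r * s) = aug_part r * aug_part s + (phi r *: aug_part s + phi s *: aug_part r).
Proof.
rewrite {1}/aug_part (augM aug).
by rewrite -{1}(aug_partK r) -{1}(aug_partK s) mulr_add_alg addrK.
Qed.

End Augmentation.

Theorem lemma4p5 (K : fieldType) (A : Type) (hA : infinite_set [set: A])
  (R_ : A -> algType K) (R : algType K) (J : set R)
  (hJ : is_ideal J)
  (* J is isomorphic to I as a K-algebra without unit *)
  (f : R -> Pi R_)
  (hf_in : forall r, J r -> in_I (f r))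
  (hf_inj : forall r s, J r -> J s -> f r = f s -> r = s)
  (hf_surj : forall x, in_I x -> exists2 r, J r & f r = x)
  (hf_add : forall r s, J r -> J s -> f (r + s) = Pi_add (f r) (f s))
  (hf_mul : forall r s, J r -> J s -> f (r * s) = Pi_mul (f r) (f s))
  (hf_scale : forall (k : K) r, J r -> f (k *: r) = Pi_scale k (f r))
  (* R/J is isomorphic to K as K-algebras: a surjective unital K-algebra
     morphism R -> K with kernel exactly J *)
  (phi : R -> K)
  (hphi_add : forall r s, phi (r + s) = phi r + phi s)
  (hphi_mul : forall r s, phi (r * s) = phi r * phi s)
  (hphi_scale : forall (k : K) r, phi (k *: r) = k * phi r)
  (hphi_one : phi 1 = 1)
  (hphi_surj : forall k : K, exists r, phi r = k)
  (hphi_ker : forall r, phi r = 0 <-> J r) :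
  (* R is isomorphic to R(kappa,K,R) as K-algebras *)
  exists g : R -> Pi R_,
    (forall r, in_RkKR (g r)) /\
        injective g /\
        (forall x, in_RkKR x -> exists r, g r = x) /\
        (forall r s, g (r + s) = Pi_add (g r) (g s)) /\
        (forall r s, g (r * s) = Pi_mul (g r) (g s)) /\
        (forall (k : K) r, g (k *: r) = Pi_scale k (g r)) /\
        g 1 = Pi_one R_.
Proof.
(* [hphi_surj] is redundant: [phi_alg] shows that phi is onto. *)
have aug : augmentation J phi by split.
have Jj r : J (aug_part phi r) := aug_part_ideal aug r.
have Ifj r : in_I (f (aug_part phi r)) := hf_in _ (Jj r).
have f0 a : f 0 a = 0.
  have := congr1 (fun z => z a) (hf_add _ _ (ideal0 hJ) (ideal0 hJ)).
  by rewrite addr0 /Pi_add => f0a; apply: (@addIr _ (f 0 a)); rewrite add0r -f0a.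
exists (fun r => Pi_add (f (aug_part phi r)) (Pi_const R_ (phi r))).
split; first by move=> r; exists (phi r), (f (aug_part phi r)); split; first exact: Ifj.
split.
  move=> r s /(Pi_add_const_inj hA (Ifj r) (Ifj s)) [efj ephi].
  by rewrite -(aug_partK phi r) -(aug_partK phi s) (hf_inj _ _ (Jj r) (Jj s) efj) ephi.
split.
  move=> _ [k [y [Iy ->]]]; have [s Js <-] := hf_surj _ Iy.
  by exists (s + k%:A); rewrite (aug_part_add_alg aug) ?(phi_add_alg aug).
split.
  move=> r s; rewrite hphi_add (aug_partD aug) hf_add //.
  exact: Pi_add_constD.
split.
  move=> r s; rewrite hphi_mul (aug_partM aug) Pi_mul_add_const.
  have JZs := ideal_scale hJ (phi r) (Jj s).
  have JZr := ideal_scale hJ (phi s) (Jj r).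
  rewrite (hf_add _ _ (ideal_mul hJ (Jj r)) (ideal_add hJ JZs JZr)).
  by rewrite (hf_mul _ _ (Jj r) (Jj s)) (hf_add _ _ JZs JZr)
    (hf_scale _ _ (Jj s)) (hf_scale _ _ (Jj r)).
split.
  by move=> k r; rewrite hphi_scale (aug_partZ aug) hf_scale // Pi_scale_add_const.
rewrite hphi_one (aug_part1 aug); apply: functional_extensionality_dep => a.
by rewrite /Pi_add /Pi_const f0 add0r scale1r.
Qed.
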